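(* Assume $p\neq 0.5$ and $e_{-1}+e_{+1}<1$. Let $\mathcal F$ be a class of measurable classifiers $f:\mathcal X\to\{-1,+1\}$ such that $\min_{f\in\mathcal F}R_{\mathcal D}(f)$ is attained, and let $\tilde f^*\in\arg\min_{f\in\mathcal F}\mathbb E_{\tilde{\mathcal D}}[\mathbb 1_{\mathrm{peer}}(f(X),\tilde Y)]$. Then $$\bigl|R_{\mathcal D}(\tilde f^* )-\min_{f\in\mathcal F}R_{\mathcal D}(f)\bigr|\le|\delta_p|,\qquad \delta_p:=\mathbb P(Y=+1)-\mathbb P(Y=-1),$$ where $R_{\mathcal D}(f)=\mathbb P_{(X,Y)\sim\mathcal D}(f(X)\neq Y)$.
   Context: Let $\mathcal X\subseteq\mathbb R^d$ and let $(X,Y)$ be a random pair with distribution $\mathcal D$ on $\mathcal X\times\{-1,+1\}$, with $p:=\mathbb P(Y=+1)\in(0,1)$. A noisy label $\tilde Y\in\{-1,+1\}$ is generated with noise rates $e_{+1}:=\mathbb P(\tilde Y=-1\mid Y=+1)$, $e_{-1}:=\mathbb P(\tilde Y=+1\mid Y=-1)$, where $\tilde Y$ is conditionally independent of $X$ given $Y$; $\tilde{\mathcal D}$ is the distribution of $(X,\tilde Y)$. The 0-1 loss is $\mathbb 1(a,b)=1$ if $a\neq b$ and $0$ otherwise. The expected 0-1 peer loss of $f$ on $\tilde{\mathcal D}$ is $$\mathbb E_{\tilde{\mathcal D}}[\mathbb 1_{\mathrm{peer}}(f(X),\tilde Y)]:=\mathbb E[\mathbb 1(f(X),\tilde Y)]-\mathbb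 E[\mathbb 1(f(X_1),\tilde Y_2)],$$ where $(X,\tilde Y),(X_1,\tilde Y_1),(X_2,\tilde Y_2)$ are i.i.d. draws from $\tilde{\mathcal D}$. *)

From HB Require Import structures.
From mathcomp Require Import all_boot all_order all_algebra.
From mathcomp Require Import all_classical all_reals all_analysis.
Set Implicit Arguments. Unset Strict Implicit. Unset Printing Implicit Defensive.
Import Order.TTheory GRing.Theory Num.Theory.
Local Open Scope classical_set_scope.
Local Open Scope ring_scope.

(* Labels: true = +1, false = -1.  The clean distribution D is a probability
   measure P on X * bool (the pair (X, Y)). *)
Section Noisy.
Context (R : realType) (d : measure_display) (X : measurableType d).
Variable P : probability (X * bool)%type R.

(* P(Ytilde = yt | Y = y), with ep = e_{+1}, em = e_{-1} *)
Definition noise_prob (ep em : R) (y yt : bool) : R :=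
  if y then (if yt then 1 - ep else ep) else (if yt then em else 1 - em).

(* The noisy distribution D~ of (X, Ytilde): Ytilde is drawn given Y only,
   independently of X:
   D~(A) = sum_{y, yt} P(Ytilde = yt | Y = y) * P((X, yt) \in A, Y = y). *)
Definition noisyD (ep em : R) (A : set (X * bool)%type) : R :=
  \sum_(y : bool) \sum_(yt : bool)
     noise_prob ep em y yt * fine (P [set z | z.2 = y /\ A (z.1, yt)]).

Definition risk (f : X -> bool) : R := fine (P [set z | f z.1 != z.2]).

(* E_{D~}[1_peer(f(X), Ytilde)] = P~(f(X) <> Ytilde) - P(f(X1) <> Ytilde2),
   with (X1,Yt1), (X2,Yt2) independent draws from D~, so that
   P(f(X1) <> Yt2) = sum_yt D~(f(X) <> yt) * D~(Ytilde = yt). *)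
Definition peer_risk (ep em : R) (f : X -> bool) : R :=
  noisyD ep em [set z | f z.1 != z.2]
  - \sum_(yt : bool) noisyD ep em [set z | f z.1 != yt]
                     * noisyD ep em [set z | z.2 = yt].
End Noisy.

From HB Require Import structures.
From mathcomp Require Import all_boot all_order all_algebra.
From mathcomp Require Import all_classical all_reals all_analysis.
From mathcomp Require Import ring lra.
Import Order.TTheory GRing.Theory Num.Theory.
Local Open Scope classical_set_scope.
Local Open Scope ring_scope.
Set Implicit Arguments.
Unset Strict Implicit.

(* Write p := P(Y = +1) and q_f := P(f(X) = +1).  Because the noisy label
   depends on X only through Y, the noisy peer risk is (1 - e_{-1} - e_{+1})
   times the clean peer risk, R_D(f) - (q_f (1 - p) + (1 - q_f) p).  Hence
   the noisy peer minimiser also minimises the clean peer risk, and the gap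
   R_D(f) - peer(f) = p + q_f (1 - 2p) varies over F by at most |1 - 2p|,
   which is |delta_p|. *)

Lemma fine_measureU (R : realType) (d : measure_display) (T : measurableType d)
    (mu : {finite_measure set T -> \bar R}) (A B : set T) :
  measurable A -> measurable B -> A `&` B = set0 ->
  fine (mu (A `|` B)) = fine (mu A) + fine (mu B).
Proof.
by move=> mA mB AB; rewrite measureU // fineD //; exact: fin_num_measure.
Qed.

Section CleanPeerRisk.
Context (R : realType) (d : measure_display) (X : measurableType d).
Variable P : probability (X * bool)%type R.

Definition label_prob (y : bool) : R := fine (P [set z | z.2 = y]).

Definition joint_prob (f : X -> bool) (y g : bool) : R :=
  fine (P [set z | z.2 = y /\ f z.1 = g]).

Definition pred_prob (f : X -> bool) (g : bool) : R :=
  joint_prob f true g + joint_prob f false g.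

(* The subtracted sum is E[1(f(X1), Y2)] for independent draws (X1, Y1),
   (X2, Y2) from D. *)
Definition clean_peer_risk (f : X -> bool) : R :=
  risk P f - \sum_(g : bool) pred_prob f g * label_prob (~~ g).

Lemma measurable_label (y : bool) : measurable [set z : X * bool | z.2 = y].
Proof.
have -> : [set z : X * bool | z.2 = y] = setT `*` [set y].
  by apply/seteqP; split => -[a b]; rewrite /setX /=; tauto.
exact: measurableX.
Qed.

Lemma measurable_joint (f : X -> bool) (y g : bool) : measurable_fun setT f ->
  measurable [set z : X * bool | z.2 = y /\ f z.1 = g].
Proof.
move=> mf.
have -> : [set z : X * bool | z.2 = y /\ f z.1 = g] = f @^-1` [set g] `*` [set y].
  by apply/seteqP; split => -[a b] /=; rewrite /setX /preimage /= => -[].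
by apply: measurableX => //; rewrite -[_ @^-1` _]setTI; exact: mf.
Qed.

Lemma joint_prob_ge0 (f : X -> bool) (y g : bool) : 0 <= joint_prob f y g.
Proof. exact/fine_ge0/measure_ge0. Qed.

Lemma label_prob_sum : label_prob true + label_prob false = 1.
Proof.
rewrite -fine_measureU; try exact: measurable_label.
  have -> : [set z : X * bool | z.2 = true] `|` [set z | z.2 = false] = setT.
    by apply/seteqP; split => -[a b] //= _; case: b; [left|right].
  exact: (congr1 fine (probability_setT P)).
by apply/seteqP; split => -[a b] //= [->].
Qed.

Section Classifier.
Variable f : X -> bool.
Hypothesis mf : measurable_fun setT f.

Lemma label_probE (y : bool) : label_prob y = joint_prob f y true + joint_prob f y false.
Proof.
rewrite /label_prob /joint_prob -fine_measureU; try exact: measurable_joint.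
  congr (fine (P _)); apply/seteqP; split => -[a b] /=.
    by move=> ->; case: (f a); [left|right].
  by case=> -[].
by apply/seteqP; split => -[a b] //= [[_ ->] [_]].
Qed.

Lemma riskE : risk P f = joint_prob f true false + joint_prob f false true.
Proof.
rewrite /risk /joint_prob -fine_measureU; try exact: measurable_joint.
  congr (fine (P _)); apply/seteqP; split => -[a b] /=.
    by case: b; case: (f a) => //= _; [left|right].
  by case=> -[-> ->].
by apply/seteqP; split => -[a b] //= [[-> _] []].
Qed.

Lemma prob_label_pred_neq (y g : bool) :
  fine (P [set z | z.2 = y /\ f z.1 != g]) = joint_prob f y (~~ g).
Proof.
congr (fine (P _)); apply/seteqP; split => -[a b] /= [-> fa]; split => //.
  by move: fa; case: (f a); case: g.
by rewrite fa; case: (g).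
Qed.

Lemma prob_label_const (y b b' : bool) :
  fine (P [set z | z.2 = y /\ b = b']) = (b == b')%:R * label_prob y.
Proof.
case: eqP => [<-|bb']; rewrite ?mul1r ?mul0r.
  by congr (fine (P _)); apply/seteqP; split => -[a c] /= => [[]|].
have -> : [set z : X * bool | z.2 = y /\ b = b'] = set0.
  by apply/seteqP; split => -[a c] // [].
by rewrite measure0.
Qed.

Lemma peer_riskE (ep em : R) :
  peer_risk P ep em f = (1 - ep - em) * clean_peer_risk f.
Proof.
rewrite /peer_risk /noisyD /clean_peer_risk /pred_prob riskE !big_bool /=.
rewrite !prob_label_pred_neq !prob_label_const /= !(label_probE true) !(label_probE false).
have := label_prob_sum; rewrite (label_probE true) (label_probE false) => total.
have -> : joint_prob f false false =
  1 - joint_prob f true true - joint_prob f true false - joint_prob f false true.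
  by rewrite -total; ring.
ring.
Qed.

Lemma pred_prob_sum : pred_prob f true + pred_prob f false = 1.
Proof.
by rewrite -label_prob_sum !label_probE /pred_prob; ring.
Qed.

Lemma pred_prob_ge0 (g : bool) : 0 <= pred_prob f g.
Proof. by rewrite addr_ge0 ?joint_prob_ge0. Qed.

Lemma pred_prob_le1 (g : bool) : pred_prob f g <= 1.
Proof.
have := pred_prob_sum; have := pred_prob_ge0 true; have := pred_prob_ge0 false.
by case: g; lra.
Qed.

Lemma risk_sub_clean_peer_risk : risk P f - clean_peer_risk f =
  label_prob true + pred_prob f true * (label_prob false - label_prob true).
Proof.
have := pred_prob_sum; rewrite /clean_peer_risk big_bool /= => total.
have -> : pred_prob f false = 1 - pred_prob f true by rewrite -total; ring.
ring.
Qed.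

End Classifier.

Lemma risk_sub_le_of_clean_peer_risk_le (f g : X -> bool) :
  measurable_fun setT f -> measurable_fun setT g ->
  clean_peer_risk f <= clean_peer_risk g ->
  risk P f - risk P g <= `|label_prob true - label_prob false|.
Proof.
move=> mf mg peer_le.
have gapE : risk P f - risk P g = clean_peer_risk f - clean_peer_risk g
    + (pred_prob f true - pred_prob g true) * (label_prob false - label_prob true).
  have := risk_sub_clean_peer_risk mf; have := risk_sub_clean_peer_risk mg.
  lra.
have pred_dist : `|pred_prob f true - pred_prob g true| <= 1.
  have := pred_prob_ge0 f true; have := pred_prob_le1 mf true.
  have := pred_prob_ge0 g true; have := pred_prob_le1 mg true.
  by rewrite ler_norml; lra.
have shift_le : (pred_prob f true - pred_prob g true) * (label_prob false - label_prob true)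
    <= `|label_prob true - label_prob false|.
  rewrite distrC; apply: le_trans (ler_norm _) _.
  by rewrite normrM ler_piMl.
lra.
Qed.

End CleanPeerRisk.

Theorem theorem3 (R : realType) (d : measure_display) (X : measurableType d)
  (P : probability (X * bool)%type R) (ep em : R) (F : set (X -> bool)) :
  0 < fine (P [set z | z.2 = true]) < 1 ->
  fine (P [set z | z.2 = true]) != 2^-1 ->
  0 <= ep <= 1 -> 0 <= em <= 1 ->
  em + ep < 1 ->
  (forall f, F f -> measurable_fun setT f) ->
  (exists f0, F f0 /\ forall f, F f -> risk P f0 <= risk P f) ->
  forall f0, F f0 -> (forall f, F f -> risk P f0 <= risk P f) ->
  forall ft, F ft -> (forall f, F f -> peer_risk P ep em ft <= peer_risk P ep em f) ->
  `| risk P ft - risk P f0 | <=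
    `| fine (P [set z | z.2 = true]) - fine (P [set z | z.2 = false]) |.
Proof.
move=> _ _ _ _ noise_lt1 mF _ f0 Ff0 f0_min ft Fft ft_min.
have clean_peer_le : clean_peer_risk P ft <= clean_peer_risk P f0.
  have noise_gt0 : 0 < 1 - ep - em by lra.
  have := ft_min _ Ff0.
  by rewrite (peer_riskE P (mF _ Fft)) (peer_riskE P (mF _ Ff0)) ler_pM2l.
rewrite ger0_norm ?subr_ge0 ?f0_min //.
exact: risk_sub_le_of_clean_peer_risk_le (mF _ Fft) (mF _ Ff0) clean_peer_le.
Qed.
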